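(* For every integer $m \geq 1$, the clique number of the graph $\mathrm{Cay}(\sigma_m)$ is at most $\rho(2^m)$, where $\rho$ is the Hurwitz-Radon function. Moreover, $\rho(2^m) < 2^m$ for $m \geq 4$.
   Context: Identify $\mathbb{Z}_2^{2m}$ with the integers $0,\dots,4^m-1$ via binary representation, so each $i \in \mathbb{Z}_2^{2m}$ has a base-4 representation with $m$ digits (each base-4 digit being a consecutive pair of bits). Define $\sigma_m:\mathbb{Z}_2^{2m}\to\mathbb{Z}_2$ by $\sigma_m(i)=1$ if and only if the number of base-4 digits of $i$ equal to $1$ is odd. The Cayley graph $\mathrm{Cay}(\sigma_m)$ is the simple undirected graph with vertex set $\mathbb{Z}_2^{2m}$ in which distinct $i,j$ are adjacent if and only if $\sigma_m(i+j)=1$. The Hurwitz-Radon function is defined by $\rho(2^{4d+c}) = 2^c + 8d$ for integers $d \geq 0$ and $0 \leq c < 4$. *)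

From mathcomp Require Import all_boot.
Set Implicit Arguments. Unset Strict Implicit. Unset Printing Implicit Defensive.

(* Z_2^{2m} identified with the integers 0 .. 4^m - 1 (binary representation);
   the group addition of Z_2^{2m} is bitwise XOR on these integers. *)
Definition vtx (m : nat) := 'I_(4 ^ m).

Definition zadd (i j : nat) : nat := Nat.lxor i j.

Definition digit4 (i k : nat) : nat := (i %/ 4 ^ k) %% 4.

Definition sigma (m i : nat) : bool :=
  odd (count (fun k => digit4 i k == 1) (iota 0 m)).

Definition cay_adj (m : nat) (i j : vtx m) : bool :=
  (i != j) && sigma m (zadd i j).

Definition is_clique (m : nat) (S : {set vtx m}) : bool :=
  [forall i in S, forall j in S, (i != j) ==> cay_adj i j].

Definition clique_number (m : nat) : nat :=
  \max_(S : {set vtx m} | is_clique S) #|S|.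

(* Hurwitz-Radon function: rho(2^(4d+c)) = 2^c + 8d, 0 <= c < 4.
   Only used at powers of two; n = 2^(logn 2 n) there. *)
Definition rho (n : nat) : nat :=
  let k := logn 2 n in 2 ^ (k %% 4) + 8 * (k %/ 4).

From HB Require Import structures.
From Stdlib Require Import PeanoNat.
From mathcomp Require Import all_boot ssralg ssrnum algC.
From mathcomp Require Import ring zify.
Set Implicit Arguments. Unset Strict Implicit. Unset Printing Implicit Defensive.
Import GRing.Theory Num.Theory.

(* Reading the k-th base-4 digit of a vertex as a pair of bits (x_k, y_k),
   Z_2^{2m} becomes an orthogonal sum of m planes carrying the quadratic form
   Q = sum_k x_k (1 + y_k), and sigma_m is Q.  Translating a clique by one of
   its vertices gives vectors v_1, ..., v_n with Q(v_i) = 1 and B(v_i, v_j) = 1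
   for i <> j, where B is the polar form of Q.  For a set x of indices,
   Q(sum_{i in x} v_i) is the parity of C(|x|+1, 2), and
   B(sum_{i in x} v_i, v_j) = |x| + [j in x] determines x up to complement, so
   subset sums are injective for even n and n <= 2m + 1.  For n = 2m they are
   a bijection, and evaluating sum_v (-1)^Q(v) = 2^m through it gives
   2^m (-1)^C(m+1,2), so C(m+1,2) is even; for n = 2m + 1 the last vector is
   the sum of all the others, which forces m odd.  Since the clique has n + 1
   vertices, these constraints are exactly the Hurwitz-Radon bound. *)


Definition tri_odd (w : nat) : bool := odd 'C(w.+1, 2).

Lemma tri_oddS w : tri_odd w.+1 = ~~ tri_odd w (+) odd w.
Proof. by rewrite /tri_odd binS bin1 oddD /=; case: odd; case: odd. Qed.

Lemma tri_odd_mod4 w : tri_odd w = tri_odd (w %% 4).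
Proof.
rewrite {1}(divn_eq w 4); elim: (w %/ 4) => [|d IH]; first by rewrite add0n.
rewrite mulSn -addnA add4n !tri_oddS /= IH.
by case: tri_odd; case: odd.
Qed.

Lemma tri_odd_double w : tri_odd (2 * w) = odd w.
Proof.
elim: w => [|w IH] //; rewrite mulnS add2n !tri_oddS /= oddM /= IH.
by case: odd.
Qed.

Lemma big_addb_odd (I : Type) (r : seq I) (P : pred I) (b : I -> bool) :
  \big[addb/false]_(i <- r | P i) b i = odd (\sum_(i <- r | P i) b i).
Proof.
rewrite (big_morph odd oddD (erefl (odd 0))).
by apply: eq_bigr => i _; case: (b i).
Qed.

Section QuadraticSpace.
Variable m : nat.

Definition vec := {ffun 'I_m -> bool * bool}.

Definition vadd (f g : vec) : vec :=
  [ffun k => ((f k).1 (+) (g k).1, (f k).2 (+) (g k).2)].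

Definition vzero : vec := [ffun => (false, false)].

Lemma vaddA : associative vadd.
Proof. by move=> f g h; apply/ffunP=> k; rewrite !ffunE /= !addbA. Qed.

Lemma vaddC : commutative vadd.
Proof. by move=> f g; apply/ffunP=> k; rewrite !ffunE /= addbC [_.2 (+) _]addbC. Qed.

Lemma vadd0 : left_id vzero vadd.
Proof. by move=> f; apply/ffunP=> k; rewrite !ffunE /=; case: (f k). Qed.

HB.instance Definition _ := Monoid.isComLaw.Build vec vzero vadd vaddA vaddC vadd0.

Lemma vaddK (c : vec) : involutive (vadd^~ c).
Proof.
by move=> f; apply/ffunP=> k; rewrite !ffunE /= -!addbA !addbb !addbF; case: (f k).
Qed.

(* Each plane contributes x (1 + y): the base-4 digit x + 2y equals 1. *)
Definition quad (f : vec) : bool := \big[addb/false]_k ((f k).1 && ~~ (f k).2).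

Definition polar (f g : vec) : bool :=
  \big[addb/false]_k (((f k).1 && (g k).2) (+) ((f k).2 && (g k).1)).

Lemma quadD f g : quad (vadd f g) = quad f (+) quad g (+) polar f g.
Proof.
rewrite /quad /polar -!big_split /=; apply: eq_bigr => k _; rewrite ffunE /=.
by case: (f k) (g k) => [[] []] [[] []].
Qed.

Lemma polarC f g : polar f g = polar g f.
Proof. by apply: eq_bigr => k _; case: (f k) (g k) => [[] []] [[] []]. Qed.

Lemma polarvv f : polar f f = false.
Proof. by rewrite /polar big1 // => k _; rewrite andbC addbb. Qed.

Lemma polar_suml (I : Type) (r : seq I) (P : pred I) (F : I -> vec) g :
  polar (\big[vadd/vzero]_(i <- r | P i) F i) g =
  \big[addb/false]_(i <- r | P i) polar (F i) g.
Proof.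
apply: (big_morph (polar^~ g)) => [f h|]; last by rewrite /polar big1 // => k _; rewrite ffunE.
rewrite /polar -big_split /=; apply: eq_bigr => k _; rewrite ffunE /=.
by case: (f k) (h k) (g k) => [[] []] [[] []] [[] []].
Qed.

End QuadraticSpace.

Arguments vadd {m}.
Arguments vzero {m}.

Lemma card_vec m : #|vec m| = 4 ^ m.
Proof. by rewrite card_ffun card_prod card_bool card_ord. Qed.

Lemma card_subsets (T : finType) : #|{set T}| = 2 ^ #|T|.
Proof. by have := card_powerset [set: T]; rewrite powersetT !cardsT. Qed.

Section CharacterSums.
Local Open Scope ring_scope.

Lemma sum_pow_card (T : finType) (R : comPzSemiRingType) (c : R) :
  \sum_(A : {set T}) c ^+ #|A| = (1 + c) ^+ #|T|.
Proof.
rewrite addrC -prodr_const bigA_distr; apply: eq_bigr => A _.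
by rewrite -big_mkcond /= prodr_const.
Qed.

(* (-1)^C(w+1,2) is the 4-periodic sequence 1, -1, -1, 1. *)
Lemma sign_tri_odd (C : numClosedFieldType) w :
  2 * (-1) ^+ tri_odd w = (1 + 'i) * 'i ^+ w + (1 - 'i) * (- 'i) ^+ w :> C.
Proof.
have i2 := @sqrCi C.
have i4 : 'i ^+ 4 = 1 :> C by ring: i2.
have Ni4 : (- 'i) ^+ 4 = 1 :> C by ring: i2.
rewrite tri_odd_mod4; set r := (w %% 4)%N.
rewrite (divn_eq w 4) -/r !exprD !exprM -!(exprAC _ 4) i4 Ni4 !expr1n !mul1r.
have : (r < 4)%N by rewrite ltn_mod.
by clearbody r; case: r => [|[|[|[|]]]] // _; rewrite /tri_odd /=; ring: i2.
Qed.

Lemma sum_sign_subsets (C : numClosedFieldType) m :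
  \sum_(x : {set 'I_(2 * m)}) (-1) ^+ tri_odd #|x| = 2 ^+ m * (-1) ^+ tri_odd m :> C.
Proof.
have i2 := @sqrCi C.
apply: (@mulfI _ 2); first by rewrite pnatr_eq0.
rewrite mulr_sumr; under eq_bigr => x _ do rewrite sign_tri_odd.
rewrite big_split /= -!mulr_sumr !sum_pow_card card_ord !exprM.
have -> : (1 + 'i) ^+ 2 = 2 * 'i :> C by ring: i2.
have -> : (1 + - 'i) ^+ 2 = 2 * - 'i :> C by ring: i2.
by rewrite mulrCA sign_tri_odd !exprMn; ring.
Qed.

Lemma sum_sign_quad (R : comPzRingType) m :
  \sum_(f : vec m) (-1) ^+ quad f = 2 ^+ m :> R.
Proof.
have signE f : (-1) ^+ quad f = \prod_(k < m) (-1) ^+ ((f k).1 && ~~ (f k).2) :> R.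
  by apply: (big_morph (fun b : bool => (-1) ^+ b : R)) => // a b; rewrite signr_addb.
under eq_bigr => f _ do rewrite signE.
rewrite -(bigA_distr_bigA (fun k (p : bool * bool) => (-1) ^+ (p.1 && ~~ p.2) : R)).
rewrite prodr_const card_ord; congr (_ ^+ _).
by rewrite -(pair_bigA _ (fun a b : bool => (-1) ^+ (a && ~~ b) : R)) /= !big_bool /=; ring.
Qed.

End CharacterSums.

Section Family.
Variables (m n : nat) (v : 'I_n -> vec m).
Hypothesis quad_v : forall i, quad (v i).
Hypothesis polar_v : forall i j, i != j -> polar (v i) (v j).

Lemma polar_vE i j : polar (v i) (v j) = (i != j).
Proof. by case: eqP => [->|/eqP /polar_v //]; apply: polarvv. Qed.

Definition subset_sum (x : {set 'I_n}) : vec m := \big[vadd/vzero]_(i in x) v i.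

Lemma polar_subset_sum x j : polar (subset_sum x) (v j) = odd #|x| (+) (j \in x).
Proof.
rewrite polar_suml; under eq_bigr => i _ do rewrite polar_vE -[i != j]addTb.
rewrite big_split /= big_addb_odd sum1_card; congr addb.
transitivity (\big[addb/false]_(i | i == j) (i \in x)); last exact: big_pred1_eq.
by rewrite big_mkcond [RHS]big_mkcond; apply: eq_bigr => i _; case: (i \in x); case: (i == j).
Qed.

Lemma quad_subset_sum x : quad (subset_sum x) = tri_odd #|x|.
Proof.
rewrite /subset_sum -big_enum cardE.
elim: (enum x) (enum_uniq x) => [|i r IH] /=.
  by rewrite big_nil /quad big1 // => k _; rewrite ffunE.
case/andP=> ir ur; rewrite big_cons quadD quad_v IH // tri_oddS polarC polar_suml.
have polar_r : {in r, forall j, polar (v j) (v i) = true}.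
  by move=> j jr; apply: polar_v; apply: contraNneq ir => <-.
by rewrite (eq_big_seq _ polar_r) big_addb_odd sum1_size; case: tri_odd; case: odd.
Qed.

Lemma subset_sum_inj : ~~ odd n -> injective subset_sum.
Proof.
move=> n_even x y sum_xy.
have polar_xy j : odd #|x| (+) (j \in x) = odd #|y| (+) (j \in y).
  by rewrite -!polar_subset_sum sum_xy.
have [oxy|noxy] := eqVneq (odd #|x|) (odd #|y|).
  by apply/setP=> j; have := polar_xy j; rewrite oxy => /addbI.
have yC : y = ~: x.
  apply/setP=> j; rewrite in_setC; move: noxy (polar_xy j).
  by case: odd; case: odd; case: (j \in x); case: (j \in y).
have := cardsC x; rewrite card_ord -yC => /(congr1 odd); rewrite oddD.
by move: n_even noxy => /negbTE ->; case: odd; case: odd.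
Qed.

Lemma family_even_bound : ~~ odd n -> 2 ^ n <= 4 ^ m.
Proof.
move=> n_even; rewrite -card_vec -[n]card_ord -card_subsets.
exact: leq_card (subset_sum_inj n_even).
Qed.

Lemma subset_sum_bij : n = 2 * m -> bijective subset_sum.
Proof.
move=> nE; apply: inj_card_bij; first by apply: subset_sum_inj; rewrite nE oddM.
by rewrite card_vec card_subsets card_ord nE expnM.
Qed.

Lemma family_arf : n = 2 * m -> ~~ tri_odd m.
Proof.
move=> nE; have sum_bij := subset_sum_bij nE.
have := sum_sign_quad algC m.
rewrite (reindex subset_sum (onW_bij _ sum_bij)) /=.
under eq_bigr => x _ do rewrite quad_subset_sum.
have two_m_neq0 : (2 ^+ m != 0 :> algC)%R by rewrite expf_neq0 // pnatr_eq0.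
rewrite nE sum_sign_subsets -[RHS]mulr1 => /(mulfI two_m_neq0).
by move/(@signr_inj algC _ false) ->.
Qed.

Lemma family_widen n' (le_n'n : n' <= n) :
  (forall i, quad (v (widen_ord le_n'n i))) /\
  (forall i j, i != j -> polar (v (widen_ord le_n'n i)) (v (widen_ord le_n'n j))).
Proof.
split=> // i j ij; apply: polar_v; apply: contra ij => /eqP/(congr1 val) /= ij_val.
exact/eqP/val_inj.
Qed.

End Family.

Lemma family_odd m (v : 'I_(2 * m).+1 -> vec m) :
  (forall i, quad (v i)) -> (forall i j, i != j -> polar (v i) (v j)) -> odd m.
Proof.
move=> quad_v polar_v.
pose w i := v (widen_ord (leqnSn (2 * m)) i).
have [quad_w polar_w] := family_widen quad_v polar_v (leqnSn (2 * m)).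
have [g _ gK] := subset_sum_bij (v := w) polar_w (erefl _).
set x := g (v ord_max); have x_sum : subset_sum w x = v ord_max by rewrite gK.
have memx j : (j \in x) = ~~ odd #|x|.
  have := polar_subset_sum polar_w x j; rewrite x_sum polarC polar_v.
    by case: (j \in x); case: odd.
  by apply/eqP => /(congr1 val) /= jE; move: (ltn_ord j); rewrite jE ltnn.
have xT : x = setT.
  apply/setP => j; rewrite memx in_setT; apply: contraTT isT => /negbNE x_odd.
  suff x0 : x = set0 by rewrite x0 cards0 in x_odd.
  by apply/setP => i; rewrite memx x_odd in_set0.
by rewrite -tri_odd_double -(card_ord (2 * m)) -cardsT -xT -(quad_subset_sum quad_w) // x_sum.
Qed.

Lemma family_bound m n (v : 'I_n -> vec m) :
  (forall i, quad (v i)) -> (forall i j, i != j -> polar (v i) (v j)) ->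
  [/\ n <= (2 * m).+1, 2 * m <= n -> ~~ tri_odd m & (2 * m).+1 <= n -> odd m].
Proof.
move=> quad_v polar_v; split=> [|le|le].
- rewrite leqNgt; apply/negP => lt.
  have [_ polar_w] := family_widen quad_v polar_v lt.
  have := family_even_bound polar_w; rewrite /= oddM /= !expnS expnM => /(_ isT).
  by have := expn_gt0 4 m; change (2 ^ 2) with 4; lia.
- have [quad_w polar_w] := family_widen quad_v polar_v le.
  exact: family_arf quad_w polar_w _.
- have [quad_w polar_w] := family_widen quad_v polar_v le.
  exact: family_odd quad_w polar_w.
Qed.

Lemma quad_clique_bound m (T : {set vec m}) :
  {in T &, forall s t, s != t -> quad (vadd s t)} ->
  [/\ #|T| <= (2 * m).+2, (2 * m).+1 <= #|T| -> ~~ tri_odd m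
    & (2 * m).+2 <= #|T| -> odd m].
Proof.
move=> quad_T.
have [->|[c cT]] := set_0Vmem T; first by rewrite cards0.
pose U := [set vadd s c | s in T :\ c].
have cardT : #|T| = #|U|.+1.
  rewrite (cardsD1 c T) cT /U card_in_imset //.
  by move=> s t _ _ /= e; rewrite -(vaddK c s) -(vaddK c t) /= e.
pose w (i : 'I_#|U|) := enum_val i.
have memw i : exists2 s, s \in T :\ c & w i = vadd s c by apply/imsetP; apply: enum_valP.
have quad_w i : quad (w i).
  by have [s /setD1P[sc sT] ->] := memw i; apply: quad_T.
have polar_w i j : i != j -> polar (w i) (w j).
  move=> ij; have wij : w i != w j by apply: contra ij => /eqP/enum_val_inj ->.
  have [s /setD1P[_ sT] ws] := memw i; have [t /setD1P[_ tT] wt] := memw j.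
  have st : s != t by apply: contraNneq wij => st; rewrite ws wt st.
  have := quadD (w i) (w j); rewrite !quad_w.
  have -> : vadd (w i) (w j) = vadd s t.
    by rewrite ws wt [vadd t c]vaddC vaddA (vaddK c s).
  by rewrite quad_T //; case: polar.
have [le_U arf par] := family_bound quad_w polar_w.
by rewrite cardT; split; rewrite ?ltnS.
Qed.

Lemma nat_divE a b : Nat.div a b = a %/ b.
Proof.
case: b => [|b]; first by rewrite divn0; case: a.
apply/esym/(Nat.div_unique _ _ _ (a %% b.+1)); first by apply/ltP; rewrite ltn_mod.
by rewrite {1}(divn_eq a b.+1) mulnC multE plusE.
Qed.

Lemma nat_powE a b : Nat.pow a b = a ^ b.
Proof. by elim: b => [|b IH] //=; rewrite IH expnS multE. Qed.

Lemma nat_oddE a : Nat.odd a = odd a.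
Proof.
suff: Nat.odd a = odd a /\ Nat.odd a.+1 = odd a.+1 by case.
elim: a => [|a [IH IHS]] //; split => //.
by rewrite -[LHS]/(Nat.odd a) IH /= negbK.
Qed.

Lemma testbitE i k : Nat.testbit i k = odd (i %/ 2 ^ k).
Proof. by rewrite Nat.testbit_odd Nat.shiftr_div_pow2 nat_oddE nat_divE nat_powE. Qed.

Lemma modn4_eq1 y : (y %% 4 == 1) = odd y && ~~ odd (y %/ 2).
Proof.
have := modn2 y; have := modn2 (y %/ 2).
by case: (odd y); case: (odd (y %/ 2)) => /= ? ?; lia.
Qed.

Definition vec_of_nat m (i : nat) : vec m :=
  [ffun k : 'I_m => (Nat.testbit i (2 * k), Nat.testbit i (2 * k).+1)].

Lemma digit4_eq1 i k :
  (digit4 i k == 1) = Nat.testbit i (2 * k) && ~~ Nat.testbit i (2 * k).+1.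
Proof. by rewrite !testbitE expnSr expnM divnMA /digit4 modn4_eq1. Qed.

Lemma sigma_quad m i : sigma m i = quad (vec_of_nat m i).
Proof.
transitivity (\big[addb/false]_(k < m) (digit4 i k == 1)).
  rewrite /sigma -(big_mkord xpredT (fun k => digit4 i k == 1)) /index_iota subn0.
  by rewrite big_addb_odd -sum1_count big_mkcond.
by apply: eq_bigr => k _; rewrite ffunE digit4_eq1.
Qed.

Lemma vec_of_nat_zadd m i j :
  vec_of_nat m (zadd i j) = vadd (vec_of_nat m i) (vec_of_nat m j).
Proof.
have xorbE a b : xorb a b = a (+) b by case: a; case: b.
by apply/ffunP => k; rewrite !ffunE /zadd !Nat.lxor_spec !xorbE.
Qed.

Lemma vec_of_nat_inj m : {in gtn (4 ^ m) &, injective (vec_of_nat m)}.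
Proof.
have high_bits i k : i < 4 ^ m -> 2 * m <= k -> Nat.testbit i k = false.
  move=> i_lt le_k; rewrite testbitE divn_small //.
  by apply: leq_trans i_lt _; rewrite -[4 ^ m](expnM 2 2) leq_exp2l.
move=> i j i_lt j_lt eq_ij; apply: Nat.bits_inj => b.
have [le_b|lt_b] := leqP (2 * m) b; first by rewrite !high_bits.
have bE : b = 2 * (b %/ 2) + odd b by rewrite -modn2 mulnC -divn_eq.
have k_lt : b %/ 2 < m by lia.
have := congr1 (fun f : vec m => f (Ordinal k_lt)) eq_ij; rewrite !ffunE /= => -[eq1 eq2].
by rewrite bE; case: (odd b); rewrite ?addn0 ?addn1.
Qed.

Lemma clique_card_bound m (S : {set vtx m}) : is_clique S ->
  [/\ #|S| <= (2 * m).+2, (2 * m).+1 <= #|S| -> ~~ tri_odd m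
    & (2 * m).+2 <= #|S| -> odd m].
Proof.
move=> S_clique.
have vec_inj : {in S &, injective (fun i : vtx m => vec_of_nat m i)}.
  by move=> i j _ _; move/vec_of_nat_inj => /(_ (ltn_ord i) (ltn_ord j))/val_inj.
rewrite -(card_in_imset vec_inj); apply: quad_clique_bound.
move=> _ _ /imsetP[i iS ->] /imsetP[j jS ->] vij.
have ij : i != j by apply: contraNneq vij => ->.
rewrite -vec_of_nat_zadd -sigma_quad.
by move/forall_inP/(_ i iS)/forall_inP/(_ j jS)/implyP/(_ ij)/andP: S_clique => [_].
Qed.

Lemma rho_pow2 m : rho (2 ^ m) = 2 ^ (m %% 4) + 8 * (m %/ 4).
Proof. by rewrite /rho pfactorK. Qed.

Lemma card_le_rho m k :
  k <= (2 * m).+2 -> ((2 * m).+1 <= k -> ~~ tri_odd m) -> ((2 * m).+2 <= k -> odd m) ->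
  k <= rho (2 ^ m).
Proof.
move=> k_le arf par; rewrite rho_pow2.
have m_mod := divn_eq m 4.
have odd_m : odd m = odd (m %% 4) by rewrite {1}m_mod oddD oddM andbF.
have : m %% 4 < 4 by rewrite ltn_mod.
move: arf par m_mod; rewrite tri_odd_mod4 odd_m.
case: (m %% 4) => [|[|[|[|//]]]] /= arf par m_mod _.
- have : ~~ ((2 * m).+2 <= k) by apply/negP => /par.
  lia.
- have : ~~ ((2 * m).+1 <= k) by apply/negP => /arf.
  lia.
- have : ~~ ((2 * m).+1 <= k) by apply/negP => /arf.
  lia.
- lia.
Qed.

Lemma ltn_mul8_exp16 d : 0 < d -> 1 + 8 * d < 16 ^ d.
Proof. by case: d => // d _; elim: d => [|d IH] //; rewrite expnS; lia. Qed.

Lemma rho_pow2_lt m : 4 <= m -> rho (2 ^ m) < 2 ^ m.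
Proof.
move=> m_ge4; rewrite rho_pow2.
have -> : 2 ^ m = 16 ^ (m %/ 4) * 2 ^ (m %% 4).
  by rewrite {1}(divn_eq m 4) expnD (mulnC _ 4) expnM.
have := ltn_mul8_exp16 (_ : 0 < m %/ 4); rewrite divn_gt0 // => /(_ m_ge4).
by have := expn_gt0 2 (m %% 4); nia.
Qed.

Theorem lemma3 :
  (forall m : nat, 1 <= m -> clique_number m <= rho (2 ^ m)) /\
  (forall m : nat, 4 <= m -> rho (2 ^ m) < 2 ^ m).
Proof.
split=> [m _|]; last exact: rho_pow2_lt.
apply/bigmax_leqP => S S_clique.
have [le_S arf par] := clique_card_bound S_clique.
exact: card_le_rho.
Qed.
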